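(* Assume that $\mathsf U_k^n\in\mathcal B(b)$ for every $k\in\mathcal V$. Let $i\in\mathcal V$, $j\in\mathcal I(i)$, and let $\gamma_{ij}\in[1,\min(\gamma_i^n,\gamma_j^n)]$. Define, for $\mathbf u\in\mathcal B(b)$, $$\Psi_{ij}(\mathbf u):=\rho e(\mathbf u)-S_{ij}^{\min}\,\rho^{\gamma_{ij}}(1-b\rho)^{1-\gamma_{ij}},\qquad S_{ij}^{\min}:=\min\big(S(\mathsf U_i^n,\gamma_{ij}),S(\mathsf U_j^n,\gamma_{ij})\big).$$ Consider the extended Riemann problem with left data $(\varrho_i^n,\mathsf M_i^n\cdot\mathbf n_{ij},\mathcal E_i^n,\Gamma_i^n)^{\mathsf T}$ and right data $(\varrho_j^n,\mathsf M_j^n\cdot\mathbf n_{ij},\mathcal E_j^n,\Gamma_j^n)^{\mathsf T}$. Then $\Psi_{ij}$ (evaluated on the states of the Riemann solution) increases across shocks in the solution of this extended Riemann problem, if a shock wave exists, i.e. from the pre-shock state to the post-shock state.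
   Context: Let $d\ge1$ and $b\ge0$. For $\mathbf u=(\rho,\mathbf m,E)\in\mathbb R^{d+2}$ with $\rho>0$ set $e(\mathbf u)=\rho^{-1}E-\tfrac12\|\mathbf m/\rho\|^2$. The admissible set is $\mathcal B(b)=\{\mathbf u=(\rho,\mathbf m,E): \rho>0,\ 1-b\rho>0,\ e(\mathbf u)>0\}$. A pressure ''oracle'' $p:\mathcal B(b)\to[0,\infty)$ is an arbitrary given function. $\mathcal V$ is a finite index set; for each $i\in\mathcal V$, $\mathcal I(i)\subset\mathcal V$ is a set containing $i$, and vectors $\mathbf c_{ij}\in\mathbb R^d$ (nonzero for $j\ne i$) are given with $\mathbf n_{ij}:=\mathbf c_{ij}/\|\mathbf c_{ij}\|$. States $\mathsf U_k^n=(\varrho_k^n,\mathsf M_k^n,\mathsf E_k^n)$ are given. For $Z\in\{i,j\}$: $\mathsf p_Z^n=p(\mathsf U_Z^n)$, $\mathsf e_Z^n=e(\mathsf U_Z^n)$, $\gamma_Z^n:=1+\frac{\mathsf p_Z^n(1-b\varrho_Z^n)}{\varrho_Z^n\mathsf e_Z^n}$, $\Gamma_Z^n:=\varrho_Z^n\gamma_Z^n$, and $\mathcal E_Z^n:=\mathsf E_Z^n-\frac{\|\mathsf M_Z^n-(\mathsf M_Z^n\cdot\mathbf n_{ij})\mathbf n_{ij}\|^2}{2\varrho_Z^n}$. For $\mathbf u\in\mathcal B(b)$ and $\gamma\ge1$, $S(\mathbf u,\gamma):=\frac{\rho e(\mathbf u)}{\rho^\gamma}(1-b\rho)^{\gamma-1}$.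 The extended Riemann problem is the one-dimensional system in $(x,t)$ $$\partial_t(\rho,m,\mathcal E,\Gamma)^{\mathsf T}+\partial_x\Big(m,\ \tfrac{m^2}{\rho}+p_{\rm cov},\ \tfrac m\rho(\mathcal E+p_{\rm cov}),\ \tfrac m\rho\Gamma\Big)^{\mathsf T}=0,\qquad p_{\rm cov}=\frac{\Gamma/\rho-1}{1-b\rho}\Big(\mathcal E-\frac{m^2}{2\rho}\Big),$$ with the left data for $x<0$ and right data for $x>0$ at $t=0$. A state $(\rho,m,\mathcal E,\Gamma)$ of this problem is identified with a state having density $\rho$ and internal energy density $\rho e=\mathcal E-\frac{m^2}{2\rho}$ when evaluating $\Psi_{ij}$. *)

From HB Require Import structures.
From mathcomp Require Import all_boot all_order all_algebra.
From mathcomp Require Import all_classical all_reals all_analysis.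
Set Implicit Arguments. Unset Strict Implicit. Unset Printing Implicit Defensive.
Import Order.TTheory GRing.Theory Num.Theory.
Local Open Scope ring_scope.

Section Defs.
Variables (R : realType) (d : nat).

Definition dotv (u v : 'rV[R]_d) : R := \sum_(k < d) u 0 k * v 0 k.
Definition normv (u : 'rV[R]_d) : R := Num.sqrt (dotv u u).

Definition e_int (rho : R) (m : 'rV[R]_d) (E : R) : R :=
  E / rho - 2^-1 * dotv (rho^-1 *: m) (rho^-1 *: m).

Definition inB (b rho : R) (m : 'rV[R]_d) (E : R) : Prop :=
  [/\ 0 < rho, 0 < 1 - b * rho & 0 < e_int rho m E].

Definition S_dens (b rho rhoe g : R) : R :=
  rhoe / (rho `^ g) * ((1 - b * rho) `^ (g - 1)).

Definition S_st (b rho : R) (m : 'rV[R]_d) (E g : R) : R :=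
  S_dens b rho (rho * e_int rho m E) g.

Definition gamma_st (p : R -> 'rV[R]_d -> R -> R) (b rho : R) (m : 'rV[R]_d) (E : R) : R :=
  1 + p rho m E * (1 - b * rho) / (rho * e_int rho m E).

Definition unitv (c : 'rV[R]_d) : 'rV[R]_d := (normv c)^-1 *: c.

Definition calE (rho : R) (M : 'rV[R]_d) (E : R) (n : 'rV[R]_d) : R :=
  E - (normv (M - dotv M n *: n)) ^+ 2 / (2 * rho).

End Defs.

(* States (rho, m, calE, Gamma) of the one-dimensional extended Riemann problem *)
Record st1 (R : Type) := St1 { s_rho : R; s_m : R; s_E : R; s_G : R }.

Section OneD.
Variable (R : realType).
Implicit Types (s : st1 R) (b sigma : R).

Definition rhoe1 s : R := s_E s - (s_m s) ^+ 2 / (2 * s_rho s).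

Definition inB1 b s : Prop :=
  [/\ 0 < s_rho s, 0 < 1 - b * s_rho s & 0 < rhoe1 s].

Definition pcov b s : R :=
  (s_G s / s_rho s - 1) / (1 - b * s_rho s) * rhoe1 s.

Definition flux_rho s : R := s_m s.
Definition flux_m b s : R := (s_m s) ^+ 2 / s_rho s + pcov b s.
Definition flux_E b s : R := s_m s / s_rho s * (s_E s + pcov b s).
Definition flux_G s : R := s_m s / s_rho s * s_G s.

Definition RH b (sl sr : st1 R) sigma : Prop :=
  [/\ flux_rho sr - flux_rho sl = sigma * (s_rho sr - s_rho sl),
      flux_m b sr - flux_m b sl = sigma * (s_m sr - s_m sl),
      flux_E b sr - flux_E b sl = sigma * (s_E sr - s_E sl) &
      flux_G sr - flux_G sl = sigma * (s_G sr - s_G sl)].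

(* velocity and sound speed of the covolume EOS with gamma = Gamma/rho:
   c^2 = gamma p_cov / (rho (1 - b rho)); eigenvalues u - c, u, u, u + c *)
Definition vel1 s : R := s_m s / s_rho s.
Definition sound1 b s : R :=
  Num.sqrt (s_G s / s_rho s * pcov b s / (s_rho s * (1 - b * s_rho s))).
Definition lam1 b s : R := vel1 s - sound1 b s.
Definition lam3 b s : R := vel1 s + sound1 b s.

Definition lax1 b (sl sr : st1 R) sigma : Prop :=
  [/\ lam1 b sr < sigma, sigma < lam1 b sl & sigma < vel1 sr].

Definition lax3 b (sl sr : st1 R) sigma : Prop :=
  [/\ lam3 b sr < sigma, sigma < lam3 b sl & vel1 sl < sigma].

Definition Psi1 b (Smin g : R) s : R :=
  rhoe1 s - Smin * (s_rho s `^ g) * ((1 - b * s_rho s) `^ (1 - g)).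

End OneD.

From HB Require Import structures.
From mathcomp Require Import all_boot all_order all_algebra.
From mathcomp Require Import all_classical all_reals all_analysis.
From mathcomp Require Import ring lra.
Import Order.TTheory GRing.Theory Num.Theory.
Set Implicit Arguments. Unset Strict Implicit. Unset Printing Implicit Defensive.
Local Open Scope ring_scope.

(* Across a 1-shock the mass flux j = m - sigma rho is the same on both sides and
   positive (Lax), and Gamma/rho is transported, so gamma agrees on both sides.  In
   the covolume v = 1/rho - b the covolume pressure is polytropic,
   p = (gamma - 1) e / v, so the Rankine-Hugoniot conditions reduce to the ideal gas
   Hugoniot relation in (v, e), and Lax's inequalities (supersonic ahead of the
   shock, subsonic behind it) force compression.  Along the Hugoniot curve the
   entropy e v^(gamma - 1) grows under compression: this is the superlinearity
   g artanh z <= artanh (g z) for g >= 1.  Finally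
   Psi = rho v^(1 - g) (e v^(g - 1) - Smin), and for 1 <= g <= gamma both factors
   grow under compression.  The reflection x -> -x turns 3-shocks into 1-shocks. *)

Section LnRatio.
Variable R : realType.

Lemma is_derive_affine (a k t : R) : is_derive t 1 (fun s : R => a + k * s) k.
Proof.
have := is_deriveD (is_derive_cst a t 1) (is_deriveZ k (is_derive_id t (1 : R))).
by rewrite add0r /GRing.scale /= mulr1.
Qed.

Lemma is_derive_ln_affine (a k t : R) : 0 < a + k * t ->
  is_derive t 1 (fun s => ln (a + k * s)) (k / (a + k * t)).
Proof.
move=> pos; rewrite [k / _]mulrC.
exact: (is_derive1_comp (f := @ln R) (g := fun s => a + k * s)
  (is_derive1_ln pos) (is_derive_affine a k t)).
Qed.

(* Twice the inverse hyperbolic tangent. *)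
Definition ln_ratio (t : R) : R := ln (1 + t) - ln (1 - t).

Lemma is_derive_ln_ratio_scale (k t : R) : -1 < k * t < 1 ->
  is_derive t 1 (fun s => ln_ratio (k * s)) (k * (2 / (1 - (k * t) ^+ 2))).
Proof.
case/andP=> lo hi.
have -> : (fun s => ln_ratio (k * s)) =
          (fun s => ln (1 + k * s)) - (fun s => ln (1 + - k * s)).
  by apply/funext => s; rewrite /ln_ratio !fctE mulNr.
have -> : k * (2 / (1 - (k * t) ^+ 2)) = k / (1 + k * t) - - k / (1 + - k * t).
  rewrite !mulNr opprK; field.
  by rewrite !expr2; repeat (apply/andP; split); apply/eqP => H; nra.
by apply: is_deriveB; apply: is_derive_ln_affine; rewrite ?mulNr; lra.
Qed.

Lemma ln_ratio_scale_ge (g z : R) : 1 <= g -> 0 <= z -> g * z < 1 ->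
  g * ln_ratio z <= ln_ratio (g * z).
Proof.
move=> g1 z0 gz1.
pose f s := ln_ratio (g * s) - g * ln_ratio s.
pose df s := g * (2 / (1 - (g * s) ^+ 2)) - g * (2 / (1 - s ^+ 2)).
have gs_lt1 s : 0 <= s <= z -> g * s < 1.
  by case/andP=> s0 sz; apply: le_lt_trans gz1; rewrite ler_wpM2l //; lra.
have s_le_gs s : 0 <= s -> s <= g * s by move=> s0; rewrite ler_peMl.
have ln_ratio_derive (s : R) : -1 < s < 1 -> is_derive s 1 ln_ratio (2 / (1 - s ^+ 2)).
  move=> s_in; have := is_derive_ln_ratio_scale (k := 1) (t := s).
  rewrite (_ : (fun x : R => ln_ratio (1 * x)) = ln_ratio) ?mul1r; first exact.
  by apply/funext => x; rewrite mul1r.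
have f_derive s : 0 <= s <= z -> is_derive s 1 f (df s).
  move=> sz; have gs1 := gs_lt1 s sz; case/andP: sz => s0 _; have s1 := s_le_gs s s0.
  apply: is_deriveB; last apply: is_deriveZ;
    [apply: is_derive_ln_ratio_scale | apply: ln_ratio_derive]; apply/andP; split; lra.
have df_ge0 s : 0 <= s <= z -> 0 <= df s.
  move=> sz; have gs1 := gs_lt1 s sz; case/andP: sz => s0 _; have s1 := s_le_gs s s0.
  rewrite subr_ge0 ler_wpM2l ?(le_trans ler01 g1) // ler_pM2l // lef_pV2 ?posrE ?subr_gt0;
    rewrite ?lerD2l ?lerN2 ?ler_pXn2r ?nnegrE //; nra.
have f0 : f 0 = 0 by rewrite /f mulr0 /ln_ratio addr0 subr0 subrr mulr0 subrr.
rewrite -subr_ge0 -/(f z) -f0.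
apply: (@ger0_derive1_ndecr _ f 0 z) => //.
- move=> s; rewrite in_itv /= => /andP[s0 sz].
  by have [] := f_derive s ltac:(apply/andP; split; lra).
- move=> s; rewrite in_itv /= => /andP[s0 sz].
  have s_in : 0 <= s <= z by apply/andP; split; lra.
  by have fs := f_derive s s_in; rewrite derive1E derive_val df_ge0.
- apply: (@continuous_in_subspaceT _ _ `[0, z]%classic f) => s; rewrite inE /= in_itv /= => sz.
  by apply/differentiable_continuous/derivable1_diffP; have [] := f_derive s sz.
Qed.

Lemma ln_ratio_quot (a c : R) : 0 < a -> 0 < c -> ln_ratio ((a - c) / (a + c)) = ln a - ln c.
Proof.
move=> a0 c0.
have e1 : 1 + (a - c) / (a + c) = 2 * a / (a + c) by field; lra.
have e2 : 1 - (a - c) / (a + c) = 2 * c / (a + c) by field; lra.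
have pos x : 0 < x -> 0 < 2 * x / (a + c) by move=> x0; apply: divr_gt0; lra.
rewrite /ln_ratio e1 e2 -ln_div ?posrE ?pos // -ln_div ?posrE //.
by congr ln; field; lra.
Qed.
End LnRatio.

Section PolytropicHugoniot.
Variable R : realType.

(* On the Hugoniot curve of a polytropic gas p_r / p_l = B / D, so this is the
   entropy inequality p_l v_l^g <= p_r v_r^g. *)
Lemma hugoniot_powR_le (g vl vr : R) : 1 <= g -> 0 < vr -> vr <= vl ->
  ((g + 1) * vr - (g - 1) * vl) * vl `^ g <= ((g + 1) * vl - (g - 1) * vr) * vr `^ g.
Proof.
move=> g1 vr0 vrl.
set D := (g + 1) * vr - (g - 1) * vl; set B := (g + 1) * vl - (g - 1) * vr.
have B0 : 0 < B by rewrite /B; nra.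
have [D_le0|D0] := leP D 0.
  apply: (@le_trans _ _ 0); first by apply: mulr_le0_ge0 => //; exact: powR_ge0.
  by apply: mulr_ge0; [lra | exact: powR_ge0].
(* With z = (vl - vr) / (vl + vr): ln_ratio z = ln (vl / vr), ln_ratio (g z) = ln (B / D). *)
have gz : g * ((vl - vr) / (vl + vr)) = (B - D) / (B + D) by rewrite /B /D; field; lra.
have z0 : 0 <= (vl - vr) / (vl + vr) by apply: divr_ge0; lra.
have gz1 : g * ((vl - vr) / (vl + vr)) < 1 by rewrite gz ltr_pdivrMr; lra.
have := ln_ratio_scale_ge g1 z0 gz1; rewrite gz !ln_ratio_quot //; try lra.
move=> ln_ineq; rewrite -ler_ln ?posrE ?mulr_gt0 ?powR_gt0 //; try lra.
rewrite !lnM ?posrE ?powR_gt0 //; try lra.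
by rewrite !ln_powR; lra.
Qed.

Lemma hugoniot_entropy (g vl vr el er : R) : 1 <= g -> 0 < vr -> vr <= vl -> 0 < el -> 0 < er ->
  er - el + ((g - 1) * er / vr + (g - 1) * el / vl) / 2 * (vr - vl) = 0 ->
  el * vl `^ (g - 1) <= er * vr `^ (g - 1).
Proof.
move=> g1 vr0 vrl el0 er0 hug.
have vl0 : 0 < vl by lra.
set D := (g + 1) * vr - (g - 1) * vl; set B := (g + 1) * vl - (g - 1) * vr.
have B0 : 0 < B by rewrite /B; nra.
have cross : er * vl * D = el * vr * B.
  apply/eqP; rewrite -subr_eq0; apply/eqP.
  rewrite -[RHS](mul0r (2 * vr * vl)) -hug /D /B.
  by field; rewrite !gt_eqF.
have D0 : 0 < D.
  have : 0 < er * vl * D by rewrite cross !mulr_gt0.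
  by rewrite pmulr_rgt0 // mulr_gt0.
have pow_split v : 0 < v -> v `^ g = v * v `^ (g - 1).
  by move=> v0; rewrite mulr_powRB1 // ?ltW //; lra.
rewrite -(ler_pM2r (_ : 0 < vr * vl * D)) ?mulr_gt0 //.
have -> : el * vl `^ (g - 1) * (vr * vl * D) = el * vr * (D * vl `^ g).
  by rewrite pow_split //; ring.
have -> : er * vr `^ (g - 1) * (vr * vl * D) = el * vr * (B * vr `^ g).
  transitivity (er * vl * D * (vr * vr `^ (g - 1))); first by ring.
  by rewrite cross pow_split //; ring.
by rewrite ler_wpM2l ?hugoniot_powR_le // mulr_ge0 // ltW.
Qed.
End PolytropicHugoniot.

Lemma shock_compressive (F : realFieldType) (g J pl pr vl vr : F) : 0 <= g -> 0 <= J ->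
  pr - pl = J * (vl - vr) -> g * pl < J * vl -> J * vr < g * pr -> vr < vl.
Proof.
move=> g0 J0 mom pre post; rewrite ltNge; apply/negP => vlr.
have prl : pr <= pl by rewrite -subr_le0 mom; apply: mulr_ge0_le0; lra.
have := ler_wpM2l J0 vlr; have := ler_wpM2l g0 prl.
lra.
Qed.

Section ShockStates.
Variables (R : realType) (b : R).
Implicit Types (s sl sr : st1 R) (sigma g Smin : R).

Definition covol1 s : R := (1 - b * s_rho s) / s_rho s.
Definition eps1 s : R := rhoe1 s / s_rho s.
Definition gamma1 s : R := s_G s / s_rho s.
Definition mass_flux s sigma : R := s_m s - sigma * s_rho s.

Lemma covol1_gt0 s : inB1 b s -> 0 < covol1 s.
Proof. by case=> r0 v0 _; apply: divr_gt0. Qed.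

Lemma eps1_gt0 s : inB1 b s -> 0 < eps1 s.
Proof. by case=> r0 _ e0; apply: divr_gt0. Qed.

Lemma RH_mass sl sr sigma : RH b sl sr sigma -> s_m sr = s_m sl + sigma * (s_rho sr - s_rho sl).
Proof. by case; rewrite /flux_rho => mass _ _ _; rewrite -mass subrKC. Qed.

Lemma RH_mass_flux sl sr sigma : RH b sl sr sigma -> mass_flux sr sigma = mass_flux sl sigma.
Proof. by move=> rh; rewrite /mass_flux (RH_mass rh); ring. Qed.

Lemma RH_pressure_jump sl sr sigma : s_rho sl != 0 -> s_rho sr != 0 -> RH b sl sr sigma ->
  pcov b sr - pcov b sl = mass_flux sl sigma ^+ 2 * ((s_rho sl)^-1 - (s_rho sr)^-1).
Proof.
move=> rl0 rr0 rh; have mr := RH_mass rh; case: rh => _ mom _ _.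
apply/eqP; rewrite -subr_eq0; apply/eqP.
transitivity (flux_m b sr - flux_m b sl - sigma * (s_m sr - s_m sl)); last by rewrite mom subrr.
by rewrite /flux_m /mass_flux mr; field; apply/andP.
Qed.

Lemma RH_gamma1 sl sr sigma : s_rho sl != 0 -> s_rho sr != 0 -> mass_flux sl sigma != 0 ->
  RH b sl sr sigma -> gamma1 sr = gamma1 sl.
Proof.
move=> rl0 rr0 j0 rh; have mr := RH_mass rh; case: rh => _ _ _ eG.
apply: (mulfI j0); apply/eqP; rewrite -subr_eq0; apply/eqP.
transitivity (flux_G sr - flux_G sl - sigma * (s_G sr - s_G sl)); last by rewrite eG subrr.
by rewrite /flux_G /gamma1 /mass_flux mr; field; apply/andP.
Qed.

Lemma RH_hugoniot sl sr sigma : s_rho sl != 0 -> s_rho sr != 0 -> mass_flux sl sigma != 0 ->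
  RH b sl sr sigma ->
  eps1 sr - eps1 sl + (pcov b sr + pcov b sl) / 2 * ((s_rho sr)^-1 - (s_rho sl)^-1) = 0.
Proof.
move=> rl0 rr0 j0 rh; have mr := RH_mass rh; case: rh => _ mom eE _.
apply: (mulfI j0); rewrite mulr0.
transitivity (flux_E b sr - flux_E b sl - sigma * (s_E sr - s_E sl)
  - (sigma + mass_flux sl sigma * ((s_rho sr)^-1 + (s_rho sl)^-1) / 2)
    * (flux_m b sr - flux_m b sl - sigma * (s_m sr - s_m sl))); last first.
  by rewrite mom eE !subrr mulr0 subrr.
by rewrite /flux_E /flux_m /eps1 /rhoe1 /mass_flux mr; field; apply/andP.
Qed.

Lemma pcov_polytropic s : 0 < s_rho s -> 0 < 1 - b * s_rho s ->
  pcov b s = (gamma1 s - 1) * eps1 s / covol1 s.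
Proof. by move=> r0 v0; rewrite /pcov /gamma1 /eps1 /covol1; field; rewrite !gt_eqF. Qed.

Lemma pcov_ge0 s : inB1 b s -> 1 <= gamma1 s -> 0 <= pcov b s.
Proof.
move=> s_ok g1; have [r0 w0 _] := s_ok.
rewrite pcov_polytropic //; apply: divr_ge0; last exact/ltW/covol1_gt0.
by rewrite mulr_ge0 ?subr_ge0 // ltW // eps1_gt0.
Qed.

Lemma invr_density s : 0 < s_rho s -> (s_rho s)^-1 = covol1 s + b.
Proof. by move=> r0; rewrite /covol1; field; rewrite gt_eqF. Qed.

Lemma mass_flux_vel1 s sigma : 0 < s_rho s -> s_rho s * (vel1 s - sigma) = mass_flux s sigma.
Proof. by move=> r0; rewrite /vel1 /mass_flux; field; rewrite gt_eqF. Qed.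

Lemma sqr_sound1 s : 0 < s_rho s -> 0 < 1 - b * s_rho s -> 0 <= gamma1 s * pcov b s ->
  (s_rho s * sound1 b s) ^+ 2 * covol1 s = gamma1 s * pcov b s.
Proof.
move=> r0 v0 p0; rewrite exprMn sqr_sqrtr; last by apply: divr_ge0 => //; apply/ltW/mulr_gt0.
by rewrite /covol1 -/(gamma1 s); field; rewrite !gt_eqF.
Qed.

Lemma lax1_mass_flux_gt0 sl sr sigma : 0 < s_rho sr -> lax1 b sl sr sigma -> 0 < mass_flux sr sigma.
Proof. by move=> r0 [_ _ u_gt]; rewrite -mass_flux_vel1 // mulr_gt0 // subr_gt0. Qed.

Lemma lax1_pre_supersonic sl sr sigma :
  0 < s_rho sl -> 0 < 1 - b * s_rho sl -> 0 <= gamma1 sl * pcov b sl -> lax1 b sl sr sigma ->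
  gamma1 sl * pcov b sl < mass_flux sl sigma ^+ 2 * covol1 sl.
Proof.
move=> r0 v0 p0 [_ fast _]; have c0 : 0 <= sound1 b sl := sqrtr_ge0 _.
have covol_gt0 : 0 < covol1 sl by apply: divr_gt0.
rewrite -(sqr_sound1 r0 v0 p0) ltr_pM2r // -mass_flux_vel1 // ltr_pXn2r // ?nnegrE.
- by rewrite ltr_pM2l //; move: fast; rewrite /lam1; lra.
- exact: mulr_ge0 (ltW r0) c0.
- by apply: mulr_ge0; [exact: ltW | move: fast; rewrite /lam1; lra].
Qed.

Lemma lax1_post_subsonic sl sr sigma :
  0 < s_rho sr -> 0 < 1 - b * s_rho sr -> 0 <= gamma1 sr * pcov b sr -> lax1 b sl sr sigma ->
  mass_flux sr sigma ^+ 2 * covol1 sr < gamma1 sr * pcov b sr.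
Proof.
move=> r0 v0 p0 [slow _ u_gt]; have c0 : 0 <= sound1 b sr := sqrtr_ge0 _.
have covol_gt0 : 0 < covol1 sr by apply: divr_gt0.
rewrite -(sqr_sound1 r0 v0 p0) ltr_pM2r // -mass_flux_vel1 // ltr_pXn2r // ?nnegrE.
- by rewrite ltr_pM2l //; move: slow; rewrite /lam1; lra.
- by apply: mulr_ge0; [exact: ltW | lra].
- exact: mulr_ge0 (ltW r0) c0.
Qed.

Lemma density_mul_covol1 s : 0 < s_rho s -> 1 - b * s_rho s = s_rho s * covol1 s.
Proof. by move=> r0; rewrite /covol1; field; rewrite gt_eqF. Qed.

Lemma S_dens_covol s g : 0 < s_rho s -> 0 < 1 - b * s_rho s ->
  S_dens b (s_rho s) (rhoe1 s) g = eps1 s * covol1 s `^ (g - 1).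
Proof.
move=> r0 v0; have covol_gt0 : 0 < covol1 s by apply: divr_gt0.
have split_g : s_rho s `^ g = s_rho s * s_rho s `^ (g - 1).
  by rewrite -{2}[s_rho s]powRr1 ?ltW // -powRD ?(gt_eqF r0) ?implybT // subrKC.
rewrite /S_dens density_mul_covol1 // powRM ?ltW // split_g /eps1.
by field; rewrite !gt_eqF ?powR_gt0.
Qed.

Lemma Psi1_covol s g Smin : 0 < s_rho s -> 0 < 1 - b * s_rho s ->
  Psi1 b Smin g s = s_rho s / covol1 s `^ (g - 1) * (S_dens b (s_rho s) (rhoe1 s) g - Smin).
Proof.
move=> r0 v0; have covol_gt0 : 0 < covol1 s by apply: divr_gt0.
have rho_pow : s_rho s `^ g * s_rho s `^ (1 - g) = s_rho s.
  by rewrite -powRD ?(gt_eqF r0) ?implybT // subrKC powRr1 // ltW.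
rewrite S_dens_covol // /Psi1 density_mul_covol1 // powRM ?ltW //.
have covol_pow : covol1 s `^ (1 - g) = (covol1 s `^ (g - 1))^-1 by rewrite -powRN opprB.
rewrite covol_pow -mulrA (mulrA (s_rho s `^ g)) rho_pow /eps1.
by field; rewrite !gt_eqF ?powR_gt0.
Qed.

Lemma S_dens_ler_exponent g gam sl sr : inB1 b sl -> inB1 b sr ->
  covol1 sr <= covol1 sl -> g <= gam ->
  S_dens b (s_rho sl) (rhoe1 sl) gam <= S_dens b (s_rho sr) (rhoe1 sr) gam ->
  S_dens b (s_rho sl) (rhoe1 sl) g <= S_dens b (s_rho sr) (rhoe1 sr) g.
Proof.
move=> sl_ok sr_ok vrl ggam; have vl0 := covol1_gt0 sl_ok; have vr0 := covol1_gt0 sr_ok.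
case: sl_ok sr_ok => rl0 wl0 el0 [rr0 wr0 er0].
have split_pow v : 0 < v -> v `^ (gam - 1) = v `^ (g - 1) * v `^ (gam - g).
  by move=> v0; rewrite -powRD ?(gt_eqF v0) ?implybT //; congr (_ `^ _); ring.
rewrite !S_dens_covol // !split_pow // !mulrA.
have Yr_le : covol1 sr `^ (gam - g) <= covol1 sl `^ (gam - g).
  by rewrite ge0_ler_powR ?nnegrE ?subr_ge0 // ltW.
have Sr0 : 0 <= eps1 sr * covol1 sr `^ (g - 1).
  by apply: mulr_ge0; [apply/ltW/divr_gt0 | exact: powR_ge0].
move=> ent; rewrite -(ler_pM2r (powR_gt0 _ vl0 : 0 < covol1 sl `^ (gam - g))).
exact: le_trans ent (ler_wpM2l Sr0 Yr_le).
Qed.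

Lemma Psi1_ler_covol g Smin sl sr : inB1 b sl -> inB1 b sr -> 1 <= g ->
  covol1 sr <= covol1 sl -> Smin <= S_dens b (s_rho sl) (rhoe1 sl) g ->
  S_dens b (s_rho sl) (rhoe1 sl) g <= S_dens b (s_rho sr) (rhoe1 sr) g ->
  Psi1 b Smin g sl <= Psi1 b Smin g sr.
Proof.
move=> sl_ok sr_ok g1 vrl Sl Slr; have vl0 := covol1_gt0 sl_ok; have vr0 := covol1_gt0 sr_ok.
case: sl_ok sr_ok => rl0 wl0 _ [rr0 wr0 _].
rewrite !Psi1_covol //; apply: ler_pM; last by lra.
- by apply: divr_ge0; [exact: ltW | exact: powR_ge0].
- by rewrite subr_ge0.
apply: ler_pM; first exact: ltW.
- by rewrite invr_ge0 powR_ge0.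
- rewrite -lef_pV2 ?posrE //.
  by rewrite !invr_density ?lerD2r.
by rewrite lef_pV2 ?posrE ?powR_gt0 // ge0_ler_powR ?nnegrE ?subr_ge0 // ltW.
Qed.

Lemma shock1_compressive_entropy sl sr sigma : inB1 b sl -> inB1 b sr -> 1 <= gamma1 sl ->
  RH b sl sr sigma -> lax1 b sl sr sigma ->
  [/\ gamma1 sr = gamma1 sl, covol1 sr < covol1 sl &
      S_dens b (s_rho sl) (rhoe1 sl) (gamma1 sl) <= S_dens b (s_rho sr) (rhoe1 sr) (gamma1 sl)].
Proof.
move=> sl_ok sr_ok gam1 rh lax.
have [rl0 wl0 _] := sl_ok; have [rr0 wr0 _] := sr_ok.
have j_eq := RH_mass_flux rh; have j0 := lax1_mass_flux_gt0 rr0 lax; rewrite j_eq in j0.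
have rl_neq0 := lt0r_neq0 rl0; have rr_neq0 := lt0r_neq0 rr0; have j_neq0 := lt0r_neq0 j0.
have gam_eq := RH_gamma1 rl_neq0 rr_neq0 j_neq0 rh.
have pl0 := pcov_ge0 sl_ok gam1.
have pr0 : 0 <= pcov b sr by rewrite pcov_ge0 // gam_eq.
have pre := lax1_pre_supersonic rl0 wl0 (mulr_ge0 (le_trans ler01 gam1) pl0) lax.
have post := lax1_post_subsonic rr0 wr0 _ lax.
rewrite j_eq gam_eq in post; have {}post := post (mulr_ge0 (le_trans ler01 gam1) pr0).
have mom := RH_pressure_jump rl_neq0 rr_neq0 rh.
rewrite !invr_density // opprD addrACA subrr addr0 in mom.
have comp := shock_compressive (le_trans ler01 gam1) (sqr_ge0 _) mom pre post.
split => //; rewrite !S_dens_covol //.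
apply: hugoniot_entropy (covol1_gt0 sr_ok) (ltW comp) (eps1_gt0 sl_ok) (eps1_gt0 sr_ok) _ => //.
have := RH_hugoniot rl_neq0 rr_neq0 j_neq0 rh.
by rewrite !pcov_polytropic // gam_eq !invr_density // opprD addrACA subrr addr0.
Qed.

Lemma Psi1_shock1 g Smin sl sr sigma : inB1 b sl -> inB1 b sr -> 1 <= g -> g <= gamma1 sl ->
  Smin <= S_dens b (s_rho sl) (rhoe1 sl) g -> RH b sl sr sigma -> lax1 b sl sr sigma ->
  Psi1 b Smin g sl <= Psi1 b Smin g sr.
Proof.
move=> sl_ok sr_ok g1 g_le Sl rh lax.
have [_ comp ent] := shock1_compressive_entropy sl_ok sr_ok (le_trans g1 g_le) rh lax.
apply: Psi1_ler_covol => //; first exact: ltW.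
exact: S_dens_ler_exponent sl_ok sr_ok (ltW comp) g_le ent.
Qed.

Definition mirror1 s : st1 R := St1 (s_rho s) (- s_m s) (s_E s) (s_G s).

Lemma rhoe1_mirror s : rhoe1 (mirror1 s) = rhoe1 s.
Proof. by rewrite /rhoe1 /= sqrrN. Qed.

Lemma pcov_mirror s : pcov b (mirror1 s) = pcov b s.
Proof. by rewrite /pcov rhoe1_mirror. Qed.

Lemma inB1_mirror s : inB1 b (mirror1 s) = inB1 b s.
Proof. by rewrite /inB1 rhoe1_mirror. Qed.

Lemma Psi1_mirror g Smin s : Psi1 b Smin g (mirror1 s) = Psi1 b Smin g s.
Proof. by rewrite /Psi1 rhoe1_mirror. Qed.

Lemma RH_mirror sl sr sigma :
  RH b sl sr sigma -> RH b (mirror1 sr) (mirror1 sl) (- sigma).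
Proof.
rewrite /RH /flux_rho /flux_m /flux_E /flux_G /= !pcov_mirror !sqrrN !mulNr.
by case=> eR eM eE eG; split; lra.
Qed.

Lemma lax3_mirror sl sr sigma :
  lax3 b sl sr sigma -> lax1 b (mirror1 sr) (mirror1 sl) (- sigma).
Proof.
rewrite /lax3 /lax1 /lam1 /lam3 /vel1 /sound1 /= !pcov_mirror mulNr.
by case=> slow fast u_lt; split; lra.
Qed.

Lemma Psi1_shock3 g Smin sl sr sigma : inB1 b sl -> inB1 b sr -> 1 <= g -> g <= gamma1 sr ->
  Smin <= S_dens b (s_rho sr) (rhoe1 sr) g -> RH b sl sr sigma -> lax3 b sl sr sigma ->
  Psi1 b Smin g sr <= Psi1 b Smin g sl.
Proof.
move=> sl_ok sr_ok g1 g_le Sr rh lax.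
rewrite -(Psi1_mirror _ _ sr) -(Psi1_mirror _ _ sl).
by apply: Psi1_shock1 (RH_mirror rh) (lax3_mirror lax); rewrite ?inB1_mirror ?rhoe1_mirror.
Qed.
End ShockStates.

Section NormalProjection.
Variables (R : realType) (d : nat).
Implicit Types (u v c M n : 'rV[R]_d) (a k rho E G : R).

Lemma dotvZl k u v : dotv (k *: u) v = k * dotv u v.
Proof. by rewrite /dotv mulr_sumr; apply: eq_bigr => i _; rewrite !mxE mulrA. Qed.

Lemma dotvZr k u v : dotv u (k *: v) = k * dotv u v.
Proof. by rewrite /dotv mulr_sumr; apply: eq_bigr => i _; rewrite !mxE mulrCA. Qed.

Lemma dotv_ge0 u : 0 <= dotv u u.
Proof. by apply: sumr_ge0 => i _; rewrite -expr2 sqr_ge0. Qed.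

Lemma dotv_subZ u v a :
  dotv (u - a *: v) (u - a *: v) = dotv u u - 2 * a * dotv u v + a ^+ 2 * dotv v v.
Proof.
by rewrite /dotv !mulr_sumr -sumrB -big_split /=; apply: eq_bigr => i _; rewrite !mxE; ring.
Qed.

Lemma sqr_dotv_unitv u c :
  dotv u (unitv c) ^+ 2 * dotv (unitv c) (unitv c) = dotv u (unitv c) ^+ 2.
Proof.
rewrite /unitv !dotvZl !dotvZr /normv.
have [->|cc_neq0] := eqVneq (dotv c c) 0.
  by rewrite sqrtr0 invr0 !mul0r expr0n /= mulr0.
have q0 : 0 < Num.sqrt (dotv c c) by rewrite sqrtr_gt0 lt_def cc_neq0 dotv_ge0.
move: (sqr_sqrtr (dotv_ge0 c)) q0; set q := Num.sqrt _ => <- q0.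
by field; rewrite gt_eqF.
Qed.

Lemma calE_sub_normal_kinetic rho M E n : 0 < rho ->
  dotv M n ^+ 2 * dotv n n = dotv M n ^+ 2 ->
  calE rho M E n - dotv M n ^+ 2 / (2 * rho) = rho * e_int rho M E.
Proof.
move=> rho0 unit_n.
rewrite /calE /e_int /normv sqr_sqrtr ?dotv_ge0 // dotv_subZ dotvZl dotvZr unit_n.
by field; rewrite gt_eqF.
Qed.

Lemma rhoe1_normal_state rho M E G c : 0 < rho ->
  rhoe1 (St1 rho (dotv M (unitv c)) (calE rho M E (unitv c)) G) = rho * e_int rho M E.
Proof. by move=> rho0; apply: calE_sub_normal_kinetic; rewrite // sqr_dotv_unitv. Qed.
End NormalProjection.

Theorem lemma4p1 (R : realType) (d : nat) (V : finType) (b : R)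
  (p : R -> 'rV[R]_d -> R -> R) (I : V -> {set V}) (c : V -> V -> 'rV[R]_d)
  (rho : V -> R) (M : V -> 'rV[R]_d) (E : V -> R) (i j : V) (gij : R) :
  (0 < d)%N -> 0 <= b ->
  (forall r m en, inB b r m en -> 0 <= p r m en) ->
  (forall k, k \in I k) ->
  (forall k l, l \in I k -> l != k -> c k l != 0) ->
  (forall k, inB b (rho k) (M k) (E k)) ->
  j \in I i ->
  let gam k := gamma_st p b (rho k) (M k) (E k) in
  1 <= gij -> gij <= Num.min (gam i) (gam j) ->
  let n := unitv (c i j) in
  let Smin := Num.min (S_st b (rho i) (M i) (E i) gij)
                      (S_st b (rho j) (M j) (E j) gij) in
  let UL := St1 (rho i) (dotv (M i) n) (calE (rho i) (M i) (E i) n) (rho i * gam i) in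
  let UR := St1 (rho j) (dotv (M j) n) (calE (rho j) (M j) (E j) n) (rho j * gam j) in
  (* 1-shock: pre-shock state = left data UL, post-shock state = Us *)
  (forall (sigma : R) (Us : st1 R),
      inB1 b Us -> RH b UL Us sigma -> lax1 b UL Us sigma ->
      Psi1 b Smin gij UL <= Psi1 b Smin gij Us) /\
  (* 3-shock: pre-shock state = right data UR, post-shock state = Us *)
  (forall (sigma : R) (Us : st1 R),
      inB1 b Us -> RH b Us UR sigma -> lax3 b Us UR sigma ->
      Psi1 b Smin gij UR <= Psi1 b Smin gij Us).
Proof.
move=> _ _ _ _ _ U_ok _ gam g1 g_min n Smin UL UR.
move: g_min; rewrite le_min => /andP[gi gj].
have [ri0 wi0 ei0] := U_ok i; have [rj0 wj0 ej0] := U_ok j.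
have eUL : rhoe1 UL = rho i * e_int (rho i) (M i) (E i) by apply: rhoe1_normal_state.
have eUR : rhoe1 UR = rho j * e_int (rho j) (M j) (E j) by apply: rhoe1_normal_state.
have UL_ok : inB1 b UL by split => //; rewrite eUL mulr_gt0.
have UR_ok : inB1 b UR by split => //; rewrite eUR mulr_gt0.
have gUL : gamma1 UL = gam i by rewrite /gamma1 /= mulrC mulKf // lt0r_neq0.
have gUR : gamma1 UR = gam j by rewrite /gamma1 /= mulrC mulKf // lt0r_neq0.
split=> sigma Us Us_ok rh lax.
- apply: Psi1_shock1 UL_ok Us_ok g1 _ _ rh lax; first by rewrite gUL.
  by rewrite eUL /Smin ge_min lexx.
- apply: Psi1_shock3 Us_ok UR_ok g1 _ _ rh lax; first by rewrite gUR.
  by rewrite eUR /Smin ge_min lexx orbT.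
Qed.
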